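(* Let $H\ge2$ be an integer, $E_\infty=2\sqrt{\frac{H-1}{H}}$, and for $u\le -E_\infty$ let \[ I(u)=-\frac{u}{E_\infty^2}\sqrt{u^2-E_\infty^2}-\log\!\left(-u+\sqrt{u^2-E_\infty^2}\right)+\log E_\infty . \] For each integer $k\ge0$ define $\Theta_{k,H}:\mathbb{R}\to\mathbb{R}$ by \[ \Theta_{k,H}(u)=\begin{cases}\frac12\log(H-1)-\frac{(H-2)u^2}{4(H-1)}-(k+1)I(u), & u\le -E_\infty,\\[2pt] \frac12\log(H-1)-\frac{H-2}{4(H-1)}, & u\ge -E_\infty.\end{cases} \] Then for all integers $k>0$ and all $u<-E_\infty$, $\Theta_{k,H}(u)<\Theta_{0,H}(u)$.
   Context: These functions describe the logarithmic asymptotics (normalized by $\Lambda$) of the mean number of critical values of index $k$ below level $\Lambda u$ of the $H$-spin spherical spin-glass Hamiltonian; the claim itself is a statement purely about the explicitly defined functions above. *)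

From Stdlib Require Import Reals.
Open Scope R_scope.

Definition E_inf (H : nat) : R := 2 * sqrt ((INR H - 1) / INR H).

Definition I_fun (H : nat) (u : R) : R :=
  - (u / (E_inf H ^ 2)) * sqrt (u ^ 2 - E_inf H ^ 2)
  - ln (- u + sqrt (u ^ 2 - E_inf H ^ 2)) + ln (E_inf H).

Definition Theta (k H : nat) (u : R) : R :=
  if Rle_dec u (- E_inf H) then
    / 2 * ln (INR H - 1) - (INR H - 2) * u ^ 2 / (4 * (INR H - 1))
      - (INR k + 1) * I_fun H u
  else
    / 2 * ln (INR H - 1) - (INR H - 2) / (4 * (INR H - 1)).

From Stdlib Require Import Reals Lra Lia.
From Coquelicot Require Import Coquelicot.
Open Scope R_scope.

(* On the branch u <= -E_inf, Theta k H u = Theta 0 H u - k I(u), so it suffices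
   that I(u) > 0 for u < -E with E = E_inf H.  With s = sqrt (u^2 - E^2) and
   t = (-u + s) / E > 1 one has 1/t = (-u - s) / E, hence
   I(u) = -u s / E^2 - ln t > s / E - ln t = (t - 1/t) / 2 - ln t > 0. *)

Lemma two_ln_lt_sub_inv (t : R) : 1 < t -> 2 * ln t < t - / t.
Proof.
  intros Ht.
  destruct (MVT_cor2 (fun x => x - / x - 2 * ln x)
              (fun x => 1 + / x ^ 2 - 2 * / x) 1 t Ht) as [c [Hmvt Hc]].
  { intros c Hc. apply is_derive_Reals. auto_derive; [lra | field; lra]. }
  rewrite ln_1, Rinv_1 in Hmvt.
  assert (Hinv_c : / c < 1)
    by (rewrite <- Rinv_1; apply Rinv_lt_contravar; lra).
  assert (Hderiv_pos : 0 < 1 + / c ^ 2 - 2 * / c).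
  { replace (1 + / c ^ 2 - 2 * / c) with ((1 - / c) ^ 2) by (field; lra).
    nra. }
  nra.
Qed.

Lemma ln_arccosh_lt (E v : R) : 0 < E -> E < v ->
  ln ((v + sqrt (v ^ 2 - E ^ 2)) / E) < v * sqrt (v ^ 2 - E ^ 2) / E ^ 2.
Proof.
  intros HE HEv.
  set (s := sqrt (v ^ 2 - E ^ 2)).
  assert (Hs : 0 < s) by (apply sqrt_lt_R0; nra).
  assert (Hss : s * s = v ^ 2 - E ^ 2) by (apply sqrt_sqrt; nra).
  set (t := (v + s) / E).
  assert (Ht : 1 < t).
  { unfold t. apply (Rmult_lt_reg_r E); [lra |]. field_simplify; lra. }
  assert (Hinv_t : / t = (v - s) / E).
  { unfold t. rewrite Rinv_div.
    apply (Rmult_eq_reg_r (E * (v + s))); [| nra].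
    field_simplify; nra. }
  assert (Hdiff : t - / t = 2 * s / E) by (rewrite Hinv_t; unfold t; field; lra).
  assert (Hs_lt : s / E < v * s / E ^ 2).
  { apply (Rmult_lt_reg_r (E ^ 2)); [nra |]. field_simplify; nra. }
  pose proof (two_ln_lt_sub_inv t Ht) as Hln.
  rewrite Hdiff in Hln. unfold Rdiv in *. lra.
Qed.

Lemma E_inf_gt0 (H : nat) : (2 <= H)%nat -> 0 < E_inf H.
Proof.
  intros HH.
  assert (HR : 2 <= INR H) by exact (le_INR 2 H HH).
  unfold E_inf. apply Rmult_lt_0_compat; [lra |].
  apply sqrt_lt_R0, Rdiv_lt_0_compat; lra.
Qed.

Lemma I_fun_gt0 (H : nat) (u : R) : (2 <= H)%nat -> u < - E_inf H ->
  0 < I_fun H u.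
Proof.
  intros HH Hu.
  pose proof (E_inf_gt0 H HH) as HE.
  assert (Hsq : u ^ 2 = (- u) ^ 2) by ring.
  assert (Hln := ln_arccosh_lt (E_inf H) (- u) HE ltac:(lra)).
  rewrite <- Hsq, ln_div in Hln; [| | lra].
  - unfold I_fun. unfold Rdiv in *. lra.
  - pose proof (sqrt_pos (u ^ 2 - E_inf H ^ 2)). lra.
Qed.

Lemma Theta_branch_sub (H k : nat) (u : R) : u <= - E_inf H ->
  Theta k H u = Theta 0 H u - INR k * I_fun H u.
Proof.
  intros Hu. unfold Theta.
  destruct (Rle_dec u (- E_inf H)); [simpl; ring | lra].
Qed.

Theorem corollary4p1 (H k : nat) (u : R) :
  (2 <= H)%nat -> (0 < k)%nat -> u < - E_inf H ->
  Theta k H u < Theta 0 H u.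
Proof.
  intros HH Hk Hu.
  pose proof (I_fun_gt0 H u HH Hu) as HI.
  assert (Hk1 : 1 <= INR k) by (apply (le_INR 1); lia).
  rewrite (Theta_branch_sub H k u); [nra | lra].
Qed.
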